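(* Let $\mathcal{P}$ be a finite poset and $f\colon\mathcal{P}\to\{0,1\}$ be $\varepsilon$-far from $k$-monotone. Then the violation hypergraph of $f$ contains a matching of $(k+1)$-uniform hyperedges of size at least $\frac{\varepsilon|\mathcal{P}|}{k+1}$.
   Context: $f\colon\mathcal{P}\to\{0,1\}$ is $k$-monotone if there is no chain $x_1\prec x_2\prec\cdots\prec x_{k+1}$ in $\mathcal{P}$ with $f(x_1)=1$ and $f(x_i)\neq f(x_{i+1})$ for all $i\in[k]$; such a chain is a violation to $k$-monotonicity. $f$ is $\varepsilon$-far from $k$-monotone if the fraction of points on which $f$ differs from any $k$-monotone function is at least $\varepsilon$. The violation hypergraph of $f$ has vertex set $\mathcal{P}$ and a hyperedge $\{x_1,\dots,x_{k+1}\}$ for every violation $x_1\prec\cdots\prec x_{k+1}$. A matching is a set of pairwise disjoint hyperedges. *)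

From mathcomp Require Import all_boot all_order all_algebra.
Set Implicit Arguments. Unset Strict Implicit. Unset Printing Implicit Defensive.
Import Order.TTheory GRing.Theory Num.Theory.
Local Open Scope order_scope.

Definition is_violation {d} {T : finPOrderType d} (f : T -> bool) (k : nat)
  (s : seq T) : bool :=
  [&& size s == k.+1, sorted <%O s, (if s is x :: _ then f x else false)
    & sorted (fun x y => f x != f y) s].

Definition k_monotone {d} {T : finPOrderType d} (f : T -> bool) (k : nat) : Prop :=
  forall s : seq T, ~~ is_violation f k s.

Definition eps_far {d} {T : finPOrderType d} {R : realFieldType} (f : T -> bool)
  (k : nat) (eps : R) : Prop :=
  forall g : T -> bool, k_monotone g k ->
    (eps <= (#|[set x | f x != g x]|%:R / #|T|%:R))%R.

Definition violation_edge {d} {T : finPOrderType d} (f : T -> bool) (k : nat)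
  (E : {set T}) : Prop :=
  exists s : seq T, is_violation f k s /\ E = [set x in s].

Definition violation_matching {d} {T : finPOrderType d} (f : T -> bool) (k : nat)
  (M : {set {set T}}) : Prop :=
  (forall E, E \in M -> violation_edge f k E) /\ trivIset M.

From mathcomp Require Import all_boot all_order all_algebra.
Import Order.TTheory GRing.Theory Num.Theory.
Set Implicit Arguments. Unset Strict Implicit. Unset Printing Implicit Defensive.

(* Take a maximum matching M of the violation hypergraph.  By maximality every
   violation meets cover M, so f restricted to S := ~: cover M has no violation, and f
   extends from S to a k-monotone g: g x is the parity of the length of the
   longest alternating chain in S starting at a 1-point and ending below x.
   As eps-farness forces f and g to differ on at least eps |P| points, all of
   them in cover M, we get eps |P| <= |cover M| = (k+1) |M|. *)

Lemma path_alternating_last (T : Type) (f : T -> bool) x s :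
  path (fun a b => f a != f b) x s -> f (last x s) = f x (+) odd (size s).
Proof.
elim: s x => [|y s IHs] x /=; first by rewrite addbF.
by case/andP=> fxy /IHs->; move: fxy; case: (f x); case: (f y); case: odd.
Qed.

Section MonotoneExtension.

Variables (d : Order.disp_t) (T : finPOrderType d) (f : T -> bool) (k : nat).
Variable S : {set T}.
Hypothesis S_violation_free :
  forall s, is_violation f k s -> ~ {subset s <= S}.

Definition alt_chain (s : seq T) : bool :=
  if s is x :: s' then
    [&& f x, path <%O x s', path (fun a b => f a != f b) x s' & all (fun z => z \in S) s]
  else false.

Definition ends_below (x : T) (j : nat) : bool :=
  [exists t : j.-tuple T, alt_chain t && (last x t <= x)%O].

(* Bounding j by k loses nothing, as alternating chains in S have at most k
   points (alt_chain_size). *)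
Definition chain_rank (x : T) : nat :=
  \max_(j < k.+1 | ends_below x j) (j : nat).

Definition monotone_extension (x : T) : bool := odd (chain_rank x).

Lemma alt_chain_size s : alt_chain s -> size s <= k.
Proof.
case: s => [//|x s] /and4P[fx lt_s alt_s S_s]; rewrite leqNgt; apply/negP => lt_ks.
apply: (S_violation_free (s := x :: take k s)).
  by rewrite /is_violation /= size_takel // eqxx fx /= !take_path.
move=> y /[!inE] /orP[/eqP-> | /mem_take ys]; apply: (allP S_s);
  by rewrite inE ?eqxx ?ys ?orbT.
Qed.

Lemma chain_rank_ge x s : alt_chain s -> (last x s <= x)%O -> size s <= chain_rank x.
Proof.
move=> chain_s le_x; have lt_sk : size s < k.+1 by rewrite ltnS alt_chain_size.
apply: (@bigop.bigmax_sup _ (Ordinal lt_sk)) => //.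
by apply/existsP; exists (Tuple (eqxx (size s))); rewrite /= chain_s le_x.
Qed.

Lemma chain_rankP x : 0 < chain_rank x ->
  exists2 s, alt_chain s & (last x s <= x)%O /\ size s = chain_rank x.
Proof.
case: (pickP [pred j : 'I_k.+1 | ends_below x j]) => [j0 reach_j0 | none];
  last by rewrite /chain_rank big_pred0.
rewrite /chain_rank (bigop.bigmax_eq_arg j0) //.
case: arg_maxnP => // j /existsP[t /andP[chain_t le_x]] _ _.
by exists t; rewrite ?size_tuple.
Qed.

Lemma chain_rank_le x : chain_rank x <= k.
Proof. by apply/bigop.bigmax_leqP => j _; rewrite -ltnS. Qed.

Lemma chain_rank_homo : {homo chain_rank : x y / (x <= y)%O >-> x <= y}.
Proof.
move=> x y le_xy; apply/bigop.bigmax_leqP => j /existsP[t /andP[chain_t le_x]].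
have last_t : last y t = last x t by move: chain_t; case: (tval t).
by rewrite -(size_tuple t) chain_rank_ge // last_t (le_trans le_x).
Qed.

Lemma monotone_extension_agree : {in S, monotone_extension =1 f}.
Proof.
move=> x Sx; rewrite /monotone_extension.
case rank_x: (chain_rank x) => [|m].
  case fx: (f x) => //.
  have := chain_rank_ge (x := x) (s := [:: x]).
  by rewrite /= fx Sx lexx rank_x => /(_ isT isT).
have := chain_rankP (x := x); rewrite rank_x.
case=> // -[//|y s] chain_ys [le_x size_ys].
have /and4P[fy lt_ys alt_ys /= /andP[Sy S_s]] := chain_ys.
have f_last : f (last y s) = odd m.+1 by rewrite path_alternating_last // fy -size_ys.
case: (f x =P f (last y s)) => [-> // | neq_f].
(* otherwise x itself prolongs the chain, beating the maximality of the rank *)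
have lt_x : (last y s < x)%O.
  by rewrite lt_neqAle le_x andbT; apply: contra_not_neq neq_f => ->.
have := chain_rank_ge (x := x) (s := y :: rcons s x).
rewrite /= fy !rcons_path lt_ys alt_ys lt_x last_rcons lexx all_rcons Sx.
rewrite eq_sym (introF eqP neq_f) Sy S_s.
by rewrite size_rcons -/(size (y :: s)) size_ys rank_x ltnn => /(_ isT isT).
Qed.

Lemma chain_rank_alternating_path x s :
  path <%O x s -> path (fun a b => monotone_extension a != monotone_extension b) x s ->
  chain_rank x + size s <= chain_rank (last x s).
Proof.
elim: s x => [|y s IHs] x /=; first by rewrite addn0.
case/andP=> lt_xy /IHs IH /andP[neq_xy /IH]; apply: leq_trans.
rewrite addnS -addSn leq_add2r ltn_neqAle chain_rank_homo ?ltW // andbT.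
by apply: contra neq_xy; rewrite /monotone_extension => /eqP ->.
Qed.

Lemma monotone_extension_k_monotone : k_monotone monotone_extension k.
Proof.
case=> [|x s] //; apply/negP => /and4P[/eqP[size_s] lt_s ext_x alt_s].
have := leq_trans (chain_rank_alternating_path lt_s alt_s) (chain_rank_le _).
rewrite size_s -{2}[k]add0n leq_add2r leqn0.
by move: ext_x; rewrite /monotone_extension; case: chain_rank.
Qed.

End MonotoneExtension.

Section ViolationMatching.

Variables (d : Order.disp_t) (T : finPOrderType d) (f : T -> bool) (k : nat).

Definition violation_edgeb (E : {set T}) : bool :=
  [exists t : k.+1.-tuple T, is_violation f k t && (E == [set x in t])].

Definition violation_matchingb (M : {set {set T}}) : bool :=
  [forall E in M, violation_edgeb E] && trivIset M.

Lemma violation_edgeP E : reflect (violation_edge f k E) (violation_edgeb E).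
Proof.
apply: (iffP existsP) => [[t /andP[viol_t /eqP->]] | [s [viol_s ->]]].
  by exists t.
have /and4P[size_s _ _ _] := viol_s.
by exists (Tuple size_s); rewrite /= viol_s eqxx.
Qed.

Lemma violation_matchingP M :
  reflect (violation_matching f k M) (violation_matchingb M).
Proof.
apply: (iffP andP) => [[/forall_inP edges tiM] | [edges tiM]]; split => //.
  by move=> E /edges/violation_edgeP.
by apply/forall_inP => E /edges/violation_edgeP.
Qed.

Lemma card_violation_edge E : violation_edge f k E -> #|E| = k.+1.
Proof.
case=> s [/and4P[/eqP size_s lt_s _ _] ->].
by rewrite cardsE (card_uniqP (sorted_uniq lt_trans ltxx lt_s)).
Qed.

Lemma card_cover_violation_matching M :
  violation_matching f k M -> #|cover M| = (#|M| * k.+1)%N.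
Proof.
case=> edges /eqP <-; rewrite -sum_nat_const.
by apply: eq_bigr => E /edges/card_violation_edge.
Qed.

Lemma maximum_violation_matching_cover :
  exists2 M, violation_matching f k M &
    forall s, is_violation f k s -> ~ {subset s <= ~: cover M}.
Proof.
have matching0 : violation_matchingb set0.
  by rewrite /violation_matchingb /trivIset /cover !big_set0 cards0 andbT;
    apply/forall_inP => E; rewrite inE.
case: (@arg_maxnP _ set0 violation_matchingb (fun M => #|M|) matching0) =>
  M /violation_matchingP matchingM maxM.
exists M => // s viol_s s_out; set E := [set x in s].
have disjE : {in M, forall B : {set T}, [disjoint E & B]}.
  move=> B BM; rewrite disjoint_subset; apply/subsetP => x /[!inE] /s_out.
  by rewrite inE; apply: contra => xB; apply/bigcupP; exists B.
have set0_notin : set0 \notin M.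
  by apply/negP => /(proj1 matchingM)/card_violation_edge; rewrite cards0.
have [tiEM E_notin] := trivIsetU1 disjE (proj2 matchingM) set0_notin.
suff /maxM : violation_matchingb (E |: M) by rewrite cardsU1 E_notin add1n /= ltnn.
apply/violation_matchingP; split => // E' /setU1P[-> | /(proj1 matchingM)//].
by exists s.
Qed.

End ViolationMatching.

Local Open Scope ring_scope.

Theorem theoremB5 (d : Order.disp_t) (T : finPOrderType d) (R : realFieldType)
  (f : T -> bool) (k : nat) (eps : R) :
  eps_far f k eps ->
  exists M : {set {set T}}, violation_matching f k M /\
    (forall E, E \in M -> #|E| = k.+1) /\
    eps * #|T|%:R / k.+1%:R <= #|M|%:R.
Proof.
move=> far; have [M matchingM cover_hits] := maximum_violation_matching_cover f k.
exists M; split=> //; split=> [E /(proj1 matchingM)/card_violation_edge //|].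
set g := monotone_extension f k (~: cover M).
have diff_cover : (#|[set x | f x != g x]| <= #|M| * k.+1)%N.
  rewrite -(card_cover_violation_matching matchingM) subset_leq_card //.
  apply/subsetP => x /[!inE]; apply: contraR => x_out.
  by rewrite /g monotone_extension_agree ?inE.
have := far g (monotone_extension_k_monotone cover_hits).
have [-> _ | T_gt0] := posnP #|T|; first by rewrite mulr0 mul0r.
rewrite ler_pdivlMr ?ltr0n // ler_pdivrMr ?ltr0n // => /le_trans; apply.
by rewrite -natrM ler_nat.
Qed.
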